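(* For integers $m\geq 5$ odd and $n\geq 3$, $\chi_{ld}(C_{m}[\overline{K_{n}}])=3$.
   Context: All graphs are finite, simple and undirected. For a graph $G=(V,E)$ of order $N$ without isolated vertices, a bijection $f\colon V\to\{1,2,\dots,N\}$ is a local distance antimagic labeling if $w(u)\neq w(v)$ for every edge $uv$, where $w(u)=\sum_{x\in N(u)}f(x)$ and $N(u)$ is the open neighborhood of $u$. $\chi_{ld}(G)$ is the minimum number of distinct weights over all local distance antimagic labelings of $G$. $C_m$ is the cycle on $m$ vertices, $\overline{K_n}$ the edgeless graph on $n$ vertices. The lexicographic product $G[H]$ has vertex set $V(G)\times V(H)$, with $(g,h)$ adjacent to $(g',h')$ iff $gg'\in E(G)$, or $g=g'$ and $hh'\in E(H)$. *)

From mathcomp Require Import all_boot.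
Set Implicit Arguments. Unset Strict Implicit. Unset Printing Implicit Defensive.

Definition cycle_rel (m : nat) : rel 'I_m :=
  fun i j => (val j == (val i).+1 %% m) || (val i == (val j).+1 %% m).

Definition empty_rel (n : nat) : rel 'I_n := fun _ _ => false.

Definition lex_prod (T1 T2 : finType) (G : rel T1) (H : rel T2) : rel (T1 * T2) :=
  fun x y => G x.1 y.1 || ((x.1 == y.1) && H x.2 y.2).

Definition weight (T : finType) (e : rel T) (f : T -> nat) (u : T) : nat :=
  \sum_(x : T | e u x) f x.

(* f is a bijection V -> {1,...,N}, N = |V|. *)
Definition is_labeling (T : finType) (f : T -> nat) : Prop :=
  injective f /\ (forall x, 0 < f x <= #|T|).

Definition ld_antimagic (T : finType) (e : rel T) (f : T -> nat) : Prop :=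
  is_labeling f /\ (forall u v, e u v -> weight e f u != weight e f v).

Definition num_weights (T : finType) (e : rel T) (f : T -> nat) : nat :=
  size (undup [seq weight e f u | u <- enum T]).

Definition chi_ld_eq (T : finType) (e : rel T) (k : nat) : Prop :=
  (exists f, ld_antimagic e f /\ num_weights e f = k) /\
  (forall f, ld_antimagic e f -> k <= num_weights e f).

From mathcomp Require Import all_boot zify.
Set Implicit Arguments. Unset Strict Implicit. Unset Printing Implicit Defensive.

(* In C_m[K_n-bar] the weight of (i, a) is the sum of the columns i - 1 and
   i + 1 of the labeling, so it only depends on i, and an antimagic labeling
   properly colours the odd cycle C_m by its weights: there are at least
   three of them.
   For m = 2p + 1, row a of the labeling is a m + 1 + g_a, where g_0 swaps 4k
   and 4k + 1, and g_1, ..., g_(n-1) permute [0, m) with column sums n p - j: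
   for even n they are 2p - j followed by pairs j, 2p - j; for odd n they are
   j + p and -2j - 1 (mod m) followed by such pairs.
   Column j thus sums to K + g_0 j - j, whose excess over K - 1 runs through
   2, 0, 1, 1 periodically; hence the weights alternate between two values
   along the cycle, except at the seam 2p ~ 0 where a third one appears. *)

Local Notation cycle_blowup m n := (lex_prod (@cycle_rel m) (@empty_rel n)).

Section CyclicOrdinals.

Variables (m : nat) (i : 'I_m).

Lemma val_ordS : ordS i = (if i.+1 == m then 0 else i.+1) :> nat.
Proof.
rewrite /=; case: eqP => [->|ne]; first by rewrite modnn.
by rewrite modn_small //; have := ltn_ord i; lia.
Qed.

Lemma val_ord_pred : ord_pred i = (if i == 0 :> nat then m.-1 else i.-1) :> nat.
Proof.
have := ltn_ord i; rewrite /=; case: eqP => [-> /= m_gt0|ne lt_im].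
  by rewrite modn_small // prednK.
by rewrite (_ : (i + m).-1 = i.-1 + m) ?modnDr ?modn_small //; lia.
Qed.

End CyclicOrdinals.

Lemma cycle_relE m (i j : 'I_m) : cycle_rel i j = (j == ordS i) || (j == ord_pred i).
Proof. by rewrite -(can2_eq (@ordSK m) (@ord_predK m)) [ordS j == i]eq_sym. Qed.

Lemma sum_cycle_rel m (F : 'I_m -> nat) (i : 'I_m) : 2 < m ->
  \sum_(j | cycle_rel i j) F j = F (ordS i) + F (ord_pred i).
Proof.
move=> m_gt2; have neq : ordS i != ord_pred i.
  apply/eqP => /(congr1 (@nat_of_ord m)); rewrite val_ordS val_ord_pred.
  by have := ltn_ord i; repeat case: eqP; lia.
rewrite (eq_bigl _ _ (cycle_relE i)) (bigD1 (ordS i)) ?eqxx //=.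
rewrite (big_pred1 (ord_pred i)) // => j /=.
by case: eqVneq => [->|]; rewrite ?(negbTE neq) ?andbT.
Qed.

Section NumWeights.

Variables (T : finType) (e : rel T) (f : T -> nat).

Lemma num_weights_ge (s : seq nat) :
  uniq s -> {subset s <= codom (weight e f)} -> size s <= num_weights e f.
Proof.
move=> s_uniq s_sub; apply: uniq_leq_size => // x /s_sub.
by rewrite mem_undup.
Qed.

Lemma num_weightsE (s : seq nat) :
  uniq s -> codom (weight e f) =i s -> num_weights e f = size s.
Proof.
move=> s_uniq codom_s; apply: perm_size; apply: uniq_perm => //.
  exact: undup_uniq.
by move=> x; rewrite mem_undup codom_s.
Qed.

End NumWeights.

Lemma weight_lex_empty (T : finType) (G : rel T) n (f : T * 'I_n -> nat) u :
  weight (lex_prod G (@empty_rel n)) f u = \sum_(j | G u.1 j) \sum_(a < n) f (j, a).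
Proof.
rewrite /weight pair_big_dep; apply: eq_big => [[j a]|[j a] _] //=.
by rewrite /lex_prod /empty_rel andbF orbF andbT.
Qed.

Lemma odd_cycle_three_colors (T : eqType) (c : nat -> T) m : odd m ->
    (forall k, k < m -> c k != c (k.+1 %% m)) ->
  exists2 k, k < m & uniq [:: c 0; c 1; c k].
Proof.
move=> odd_m proper.
have m_gt1 : 1 < m.
  case: m odd_m proper => [|[|m]] //= _ /(_ 0 isT).
  by rewrite modnn eqxx.
have c01 : c 0 != c 1 by have := proper 0 (ltnW m_gt1); rewrite modn_small.
have [/hasP[k]|/hasPn two] := boolP (has (fun k => uniq [:: c 0; c 1; c k]) (iota 0 m)).
  by rewrite mem_iota; exists k.
have {}two k : k < m -> c k = c 0 \/ c k = c 1.
  move=> lt_km; have := two k; rewrite mem_iota lt_km /= !inE.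
  move/(_ isT); rewrite (negbTE c01) andbT negb_and !negbK.
  by case/orP => /eqP <-; [left|right].
have alt k : k < m -> c k = if odd k then c 1 else c 0.
  elim: k => [//|k IH] lt_km.
  have := proper k (ltnW lt_km); rewrite modn_small // IH ?(ltnW lt_km) //.
  by case: (two _ lt_km) => ->; rewrite /=; case: (odd k); rewrite ?eqxx.
have odd_pred : odd m.-1 = false by rewrite -subn1 oddB ?odd_m //; lia.
have := proper m.-1; rewrite prednK 1?modnn ?leqnn; last lia.
by rewrite (alt m.-1) ?odd_pred ?eqxx //; lia.
Qed.

Lemma three_le_num_weights m n (f : 'I_m * 'I_n -> nat) : odd m -> 0 < n ->
    (forall u v, cycle_blowup m n u v ->
       weight (cycle_blowup m n) f u != weight (cycle_blowup m n) f v) ->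
  3 <= num_weights (cycle_blowup m n) f.
Proof.
case: m f => [//|m] f odd_m n_gt0 proper.
pose c k := weight (cycle_blowup m.+1 n) f (inord k, Ordinal n_gt0).
have [k lt_km uniq_c] : exists2 k, k < m.+1 & uniq [:: c 0; c 1; c k].
  apply: odd_cycle_three_colors => // k lt_km; apply: proper.
  rewrite /lex_prod cycle_relE -orbA; apply/orP; left; apply/eqP/val_inj => /=.
  by rewrite !inordK ?ltn_pmod.
apply: (num_weights_ge uniq_c) => x; rewrite !inE => /or3P[]/eqP->; exact: codom_f.
Qed.

Lemma row_major_labeling m n (g : nat -> nat -> nat) :
    (forall a j, j < m -> g a j < m) -> (forall a, {in gtn m &, injective (g a)}) ->
  is_labeling (fun x : 'I_m * 'I_n => x.2 * m + g x.2 x.1 + 1).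
Proof.
move=> g_lt g_inj; split=> [[i a] [i' a'] /= /addIn eq_lab|[i a] /=].
  have m_gt0 : 0 < m by apply: leq_ltn_trans (ltn_ord i).
  have eq_a : a = a'.
    apply: val_inj; have := congr1 (divn^~ m) eq_lab.
    by rewrite !divnMDl // !divn_small ?g_lt // !addn0.
  subst a'; congr (_, _); apply/val_inj/(g_inj a); rewrite ?inE ?ltn_ord //.
  exact: addnI eq_lab.
rewrite card_prod !card_ord addn1 /= [m * n]mulnC.
apply: (@leq_trans (a.+1 * m)); last by rewrite leq_mul2r ltn_ord orbT.
by rewrite mulSn addnC ltn_add2r g_lt.
Qed.

Section Rows.

Variable p : nat.
Local Notation m := (2 * p).+1.

Definition pair_swap j :=
  if (j %% 4 == 0) && (j.+1 < m) then j.+1 else if j %% 4 == 1 then j.-1 else j.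

Lemma leq_pair_swap j : j <= (pair_swap j).+1.
Proof. rewrite /pair_swap; repeat case: ifP; lia. Qed.

Definition shift j := if j <= p then j + p else j - p.+1.

Definition twice j := if j <= p then 2 * p - 2 * j else 4 * p + 1 - 2 * j.

Definition mirror j := 2 * p - j.

Definition row (b : bool) a j :=
  if a == 0 then pair_swap j
  else if b && (a == 1) then shift j
  else if b && (a == 2) then twice j
  else if odd a != b then mirror j else j.

Lemma row_lt b a j : j < m -> row b a j < m.
Proof. rewrite /row /pair_swap /shift /twice /mirror; repeat case: ifP; lia. Qed.

Lemma row_inj b a : {in gtn m &, injective (row b a)}.
Proof.
move=> j j'; rewrite !inE /row /pair_swap /shift /twice /mirror.
repeat case: ifP; lia.
Qed.

Lemma row_high (b : bool) a j : 2 + b <= a -> row b a j = if odd a != b then mirror j else j.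
Proof. by rewrite /row; case: b => /= le; repeat case: eqP => //; lia. Qed.

Lemma sum_row_pairs (b : bool) k j : j < m ->
  \sum_(a < 2 * k + 2 + b) row b a j + j = pair_swap j + (2 * k + 2 + b) * p.
Proof.
move=> lt_jm; elim: k => [|k IH].
  by case: b; rewrite !big_ord_recr big_ord0 /row /shift /twice /mirror /=; try case: ifP; lia.
rewrite (_ : 2 * k.+1 + 2 + b = (2 * k + 2 + b).+2); last lia.
have odd_b : odd (2 * k + 2 + b) = b.
  by rewrite -addnA addnC oddD oddM /= addbF negbK oddb.
rewrite !big_ord_recr /= !row_high /= ?odd_b; try lia.
by case: b IH {odd_b} => /= IH; rewrite /mirror; lia.
Qed.

Lemma sum_row n j : 1 < n -> j < m -> \sum_(a < n) row (odd n) a j + j = pair_swap j + n * p.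
Proof.
move=> n_gt1 lt_jm; have n_split : n = 2 * (n - 2)./2 + 2 + odd n.
  have := odd_double_half (n - 2); rewrite oddB // addbF -mul2n; lia.
by have := sum_row_pairs (odd n) ((n - 2)./2) lt_jm; rewrite -n_split.
Qed.

Definition excess j := (pair_swap j).+1 - j.

Definition cycle_weight (i : 'I_m) := excess (ordS i) + excess (ord_pred i).

End Rows.

Section CycleWeight.

Variable p : nat.
Hypothesis p_gt1 : 1 < p.
Local Notation m := (2 * p).+1.

Lemma cycle_weightE (i : 'I_m) :
  cycle_weight i = if i < (2 * p).-1 then (if odd i then 3 else 1)
                   else if odd (i + p) then 2 else 3.
Proof.
rewrite /cycle_weight /excess val_ordS val_ord_pred /pair_swap.
have := ltn_ord i; repeat case: ifP; lia.
Qed.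

Lemma cycle_weight_ordS (i : 'I_m) : cycle_weight i != cycle_weight (ordS i).
Proof.
rewrite !cycle_weightE val_ordS; have := ltn_ord i.
by repeat case: ifP => /=; lia.
Qed.

Lemma codom_cycle_weight : codom (@cycle_weight p) =i [:: 1; 2; 3].
Proof.
move=> k; apply/codomP/idP => [[i ->]|].
  by rewrite cycle_weightE !inE; repeat case: ifP.
rewrite !inE => /or3P[]/eqP->.
- by exists ord0; rewrite cycle_weightE /=; case: ifP; lia.
- exists (inord ((2 * p).-1 + odd p)); rewrite cycle_weightE inordK; last lia.
  by repeat case: ifP; lia.
- exists (inord 1); rewrite cycle_weightE inordK; last lia.
  by repeat case: ifP; lia.
Qed.

End CycleWeight.

Section Labeling.

Variables p n : nat.
Hypotheses (p_gt1 : 1 < p) (n_gt1 : 1 < n).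
Local Notation m := (2 * p).+1.

Definition label (x : 'I_m * 'I_n) := x.2 * m + row p (odd n) x.2 x.1 + 1.

Lemma label_is_labeling : is_labeling label.
Proof. exact: row_major_labeling (@row_lt p (odd n)) (@row_inj p (odd n)). Qed.

Let column_const := \sum_(a < n) a * m + n * p.+1.

Lemma sum_label_column (j : 'I_m) :
  (\sum_(a < n) label (j, a)).+1 = column_const + excess p j.
Proof.
rewrite /label /column_const /excess !big_split /= sum1_card card_ord mulnS.
have := sum_row n_gt1 (ltn_ord j); have := leq_pair_swap p j.
set s := \sum_(a < n) a * m; set r := \sum_(a < n) row p (odd n) a j; lia.
Qed.

Lemma weight_label u : weight (cycle_blowup m n) label u + 2 = 2 * column_const + cycle_weight u.1.
Proof.
rewrite weight_lex_empty sum_cycle_rel; last lia.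
rewrite addn2 -addnS -addSn !sum_label_column.
by rewrite addnACA addnn -mul2n.
Qed.

Lemma weight_label_eq u v :
  (weight (cycle_blowup m n) label u == weight (cycle_blowup m n) label v) = (cycle_weight u.1 == cycle_weight v.1).
Proof. by rewrite -(eqn_add2r 2) !weight_label eqn_add2l. Qed.

Lemma label_ld_antimagic : ld_antimagic (cycle_blowup m n) label.
Proof.
split=> [|u v]; first exact: label_is_labeling.
rewrite weight_label_eq /lex_prod /empty_rel andbF orbF cycle_relE.
case/orP=> /eqP->; first exact: cycle_weight_ordS.
by rewrite -{1}(ord_predK u.1) eq_sym cycle_weight_ordS.
Qed.

Lemma num_weights_label : num_weights (cycle_blowup m n) label = 3.
Proof.
have const_gt0 : 0 < column_const by rewrite ltn_addl // muln_gt0; lia.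
rewrite (@num_weightsE _ _ _ [seq 2 * column_const + k - 2 | k <- [:: 1; 2; 3]]) //.
  by rewrite /= !inE; lia.
move=> x; apply/codomP/mapP => [[u ->]|[k]].
  exists (cycle_weight u.1); first by rewrite -(codom_cycle_weight p_gt1) codom_f.
  by rewrite -weight_label addnK.
rewrite -(codom_cycle_weight p_gt1) => /codomP[i ->] ->.
pose b0 := Ordinal (ltnW n_gt1).
by exists (i, b0); rewrite -(weight_label (i, b0)) addnK.
Qed.

End Labeling.

Theorem mainTheorem14 (m n : nat) :
  5 <= m -> odd m -> 3 <= n ->
  chi_ld_eq (@lex_prod (ordinal m) (ordinal n) (@cycle_rel m) (@empty_rel n)) 3.
Proof.
move=> m_ge5 odd_m n_ge3.
have [p m_eq] : exists p, m = (2 * p).+1.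
  by exists m./2; have := odd_double_half m; rewrite odd_m -mul2n; lia.
subst m; have p_gt1 : 1 < p by lia.
have n_gt1 : 1 < n by lia.
split=> [|f [_ proper]].
  by exists (@label p n); split; [exact: label_ld_antimagic | exact: num_weights_label].
by apply: three_le_num_weights => //; lia.
Qed.
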